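(* Let $G$ be a bipartite cubic graph and let $C = v_1v_2\cdots v_tv_1$ be a cycle in $G$ with $t \ge 6$. Then $V(C)$ can be partitioned into at most $\frac{t}{3}$ sets $W_1,\dots,W_m$ (so $m \le t/3$) such that each $G[W_j]$ is a path with at least $2$ vertices.
   Context: All graphs are finite and simple; cubic means $3$-regular. $G[W]$ denotes the subgraph of $G$ induced on the vertex set $W$. *)

From mathcomp Require Import all_boot.
Set Implicit Arguments. Unset Strict Implicit. Unset Printing Implicit Defensive.

Definition simple_graph (T : finType) (e : rel T) : Prop :=
  symmetric e /\ irreflexive e.

Definition cubic (T : finType) (e : rel T) : Prop :=
  forall x : T, #|[set y | e x y]| = 3.

Definition bipartite (T : finType) (e : rel T) : Prop :=
  exists c : T -> bool, forall x y, e x y -> c x != c y.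

Definition induced_path (T : finType) (e : rel T) (W : {set T}) : Prop :=
  exists s : seq T,
    [/\ uniq s, W = [set x in s] &
        forall i j, i < size s -> j < size s ->
          forall x0 : T, e (nth x0 s i) (nth x0 s j) = (i.+1 == j) || (j.+1 == i)].

From mathcomp Require Import all_boot zify.
Set Implicit Arguments. Unset Strict Implicit. Unset Printing Implicit Defensive.

(* Cut the cycle v_n v_(n+1) ... (indices mod t) into consecutive segments:
   t mod 3 segments of four vertices, then segments of three, giving at most
   t/3 blocks.  Consecutive vertices are adjacent and, the graph being
   bipartite, vertices two apart are not, so a three-vertex segment always
   induces a path and a four-vertex segment v_j..v_(j+3) does so unless
   v_j v_(j+3) is a chord.  In a cubic graph the chords v_j v_(j+3) and
   v_(j+3) v_(j+6) cannot coexist (v_(j+3) would have four neighbours), which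
   yields a start n for which neither v_n v_(n+3) nor v_(n+4) v_(n+7) is a
   chord; as t mod 3 <= 2 this is all the four-vertex segments need. *)

Section Blocks.
Variable T : finType.

Lemma flatten_uniq_mem_eq (bs : seq (seq T)) b1 b2 x :
  uniq (flatten bs) -> b1 \in bs -> b2 \in bs -> x \in b1 -> x \in b2 -> b1 = b2.
Proof.
elim: bs => [|b bs IH] //=; rewrite cat_uniq => /and3P[_ /hasPn disj Ubs].
have notin b' : b' \in bs -> x \in b' -> x \notin b.
  by move=> b'bs xb'; apply: disj; apply/flattenP; exists b'.
rewrite !inE => /predU1P[-> | b1bs] /predU1P[-> | b2bs] xb1 xb2 //.
- by rewrite (negPf (notin _ b2bs xb2)) in xb1.
- by rewrite (negPf (notin _ b1bs xb1)) in xb2.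
- exact: IH.
Qed.

Lemma partition_blocks (bs : seq (seq T)) :
  uniq (flatten bs) -> [::] \notin bs ->
  exists P : {set {set T}},
    [/\ partition P [set x in flatten bs], #|P| <= size bs &
        forall W, W \in P -> exists2 b, b \in bs & W = [set x in b]].
Proof.
move=> Ubs bs0; exists [set W in [seq [set x in b] | b <- bs]].
split; last by move=> W /[!inE] /mapP.
- apply/and3P; split.
  + apply/eqP/setP => x; rewrite inE; apply/bigcupP/flattenP.
      by case=> _ /[!inE] /mapP[b bbs ->] /[!inE]; exists b.
    by case=> b bbs xb; exists [set y in b]; rewrite ?inE //; apply: map_f.
  + apply/trivIsetP => _ _ /[!inE] /mapP[b1 b1bs ->] /mapP[b2 b2bs ->] neq.
    rewrite -setI_eq0; apply/set0Pn => -[x /[!inE] /andP[xb1 xb2]].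
    by rewrite (flatten_uniq_mem_eq Ubs b1bs b2bs xb1 xb2) eqxx in neq.
  + apply/negP; rewrite inE => /mapP[b bbs /esym/setP b0].
    case: b bbs b0 => [|y b] bbs b0; first by rewrite bbs in bs0.
    by have := b0 y; rewrite !inE eqxx.
- by rewrite cardsE (leq_trans (card_size _)) ?size_map.
Qed.

End Blocks.

Definition segments (T : Type) (u : nat -> T) (a l m : nat) : seq (seq T) :=
  [seq [seq u i | i <- iota (a + l * q) l] | q <- iota 0 m].

Lemma flatten_segments (T : Type) (u : nat -> T) a l m :
  flatten (segments u a l m) = [seq u i | i <- iota a (l * m)].
Proof.
elim: m => [|m IH]; first by rewrite muln0.
rewrite /segments -addn1 iotaD map_cat flatten_cat -/(segments _ _ _ _) IH.
by rewrite /= cats0 add0n mulnDr muln1 iotaD map_cat.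
Qed.

Lemma mem_segments (T : eqType) (u : nat -> T) a l m b :
  b \in segments u a l m -> exists2 q, q < m & b = [seq u i | i <- iota (a + l * q) l].
Proof. by case/mapP => q /[!mem_iota] /= qm ->; exists q. Qed.

Lemma exists_free_pair4 (S : pred nat) :
  (forall j, S j -> ~~ S (j + 3)) -> exists n, ~~ S n && ~~ S (n + 4).
Proof.
move=> sparse; pose free n := ~~ S n && ~~ S (n + 4).
have step n : ~~ S n -> ~~ free n -> ~~ S n.+1.
  move=> Sn /nandP[/negPn Sn' | /negPn Sn4]; first by rewrite Sn' in Sn.
  by apply/negP => /sparse; rewrite addSnnS Sn4.
have [j Sj] : exists j, ~~ S j.
  by case S0: (S 0); [exists 3; exact: (sparse 0) | exists 0; rewrite S0].
(* If no n in [j, j + 3] is free, ~~ S spreads from j up to j + 4, while the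
   failure at j itself forces S (j + 4). *)
have [/hasP[n _ fn] | /hasPn nofree] := boolP (has free (iota j 4)).
  by exists n.
have nofree_at n : j <= n < j + 4 -> ~~ free n by move=> jn; apply: nofree; rewrite mem_iota.
have Sj4 : S (j + 4) by move: (nofree_at j ltac:(lia)); rewrite /free Sj /= negbK.
have Sj1 := step _ Sj (nofree_at j ltac:(lia)).
have Sj2 := step _ Sj1 (nofree_at j.+1 ltac:(lia)).
have Sj3 := step _ Sj2 (nofree_at j.+2 ltac:(lia)).
have := step _ Sj3 (nofree_at j.+3 ltac:(lia)).
by rewrite -addn4 Sj4.
Qed.

Section Walk.
Variables (T : finType) (e : rel T) (u : nat -> T).
Hypothesis u_walk : forall i, e (u i) (u i.+1).

Lemma bipartite_walk_nochord2 : bipartite e -> forall i, ~~ e (u i) (u (i + 2)).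
Proof.
case=> c c_proper i; apply/negP => /c_proper.
have := c_proper _ _ (u_walk i); have := c_proper _ _ (u_walk i.+1).
by rewrite addn2; case: (c (u i)); case: (c (u i.+1)); case: (c (u i.+2)).
Qed.

Lemma cubic_walk_no_double_chord3 j :
  symmetric e -> cubic e -> {in iota j 7 &, injective u} ->
  e (u j) (u (j + 3)) -> ~~ e (u (j + 3)) (u (j + 6)).
Proof.
move=> e_sym e3 u_inj chord1; apply/negP => chord2.
have Unb : uniq [:: u (j + 2); u (j + 4); u j; u (j + 6)].
  by rewrite /= !inE !(inj_in_eq u_inj) ?mem_iota; lia.
suff /(uniq_leq_size Unb) : {subset [:: u (j + 2); u (j + 4); u j; u (j + 6)]
                               <= enum [set y | e (u (j + 3)) y]}.
  by rewrite -cardE e3.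
move=> y; rewrite mem_enum !inE => /or4P[] /eqP -> //.
- by rewrite e_sym addn3 addn2.
- by rewrite addn3 addn4.
- by rewrite e_sym.
Qed.

Lemma walk_segment_induced_path a l :
  symmetric e -> irreflexive e -> (forall i, ~~ e (u i) (u (i + 2))) ->
  {in iota a l &, injective u} -> 2 <= l <= 4 ->
  (l = 4 -> ~~ e (u a) (u (a + 3))) ->
  let W := [set x in [seq u i | i <- iota a l]] in
  2 <= #|W| /\ induced_path e W.
Proof.
move=> e_sym e_irr nochord2 u_inj l24 nochord3 W.
set s := [seq u i | i <- iota a l].
have Us : uniq s by rewrite map_inj_in_uniq ?iota_uniq.
have size_s : size s = l by rewrite size_map size_iota.
have nth_s x0 i : i < l -> nth x0 s i = u (a + i).
  move=> il; rewrite (set_nth_default (u 0)) ?size_s //.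
  by rewrite (nth_map 0) ?size_iota // nth_iota.
split; first by rewrite cardsE (card_uniqP Us) size_s; lia.
exists s; split => //; rewrite size_s => i j il jl x0; rewrite !nth_s //.
wlog le_ij : i j il jl / i <= j.
  move=> sym_ij; case: (leqP i j) => [|/ltnW]; first exact: sym_ij.
  by rewrite e_sym orbC; apply: sym_ij.
have [d def_j] : exists d, j = i + d by exists (j - i); lia.
subst j; case: d {le_ij} jl => [|[|[|[|d]]]] jl.
- by rewrite addn0 e_irr; apply/esym/negbTE; lia.
- by rewrite addn1 addnS u_walk eqxx.
- by rewrite addnA (negbTE (nochord2 _)); apply/esym/negbTE; lia.
- have [-> l4] : i = 0 /\ l = 4 by lia.
  by rewrite addn0 add0n (negbTE (nochord3 l4)).
- lia.
Qed.
End Walk.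

Section CyclicIndex.
Variables (T : eqType) (x0 : T) (C : seq T).
Local Notation t := (size C).

Lemma cycle_nth_modS (e : rel T) : cycle e C -> 0 < t ->
  forall i, e (nth x0 C (i %% t)) (nth x0 C (i.+1 %% t)).
Proof.
move=> Ce t_gt0 i; rewrite -addn1 -modnDml addn1.
have : i %% t < t := ltn_pmod i t_gt0.
case: C Ce {t_gt0} => [|x p] //= /(pathP x0) Ce.
move: {i}(i %% _) => j jt; have := Ce j; rewrite size_rcons => /(_ jt).
rewrite -rcons_cons !nth_rcons /= jt.
case: (ltngtP j (size p)) jt => [jp _ | pj jt | -> _].
- by rewrite modn_small.
- lia.
- by rewrite modnn.
Qed.

Lemma nth_mod_inj a l : uniq C -> l <= t ->
  {in iota a l &, injective (fun i => nth x0 C (i %% t))}.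
Proof.
move=> UC l_le_t i j /[!mem_iota] /andP[ai il] /andP[aj jl] /eqP.
have t_gt0 : 0 < t by lia.
rewrite nth_uniq ?ltn_pmod //.
rewrite -(subnKC ai) -(subnKC aj) eqn_modDl !modn_small; lia.
Qed.

Lemma mem_nth_mod_window a : uniq C ->
  [seq nth x0 C (i %% t) | i <- iota a t] =i C.
Proof.
move=> UC; apply: (uniq_min_size _ _ _).2.
- by rewrite map_inj_in_uniq ?iota_uniq //; apply: nth_mod_inj.
- by move=> _ /mapP[i /[!mem_iota] ai ->]; rewrite mem_nth // ltn_pmod //; lia.
- by rewrite size_map size_iota.
Qed.
End CyclicIndex.

Lemma cubic_cycle_free_starts (T : finType) (e : rel T) x0 (C : seq T) :
  symmetric e -> cubic e -> uniq C -> cycle e C -> 6 <= size C ->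
  let v i := nth x0 C (i %% size C) in
  exists n, forall q, q < size C %% 3 -> ~~ e (v (n + 4 * q)) (v (n + 4 * q + 3)).
Proof.
move=> e_sym e3 UC Ce t6 v.
have [r0 | r_gt0] := posnP (size C %% 3); first by exists 0; rewrite r0.
have t7 : 7 <= size C by lia.
have [n /andP[free0 free1]] :
    exists n, ~~ e (v n) (v (n + 3)) && ~~ e (v (n + 4)) (v (n + 4 + 3)).
  apply: (exists_free_pair4 (S := fun j => e (v j) (v (j + 3)))) => j /=.
  rewrite -addnA; apply: cubic_walk_no_double_chord3 => //.
  - by apply: cycle_nth_modS => //; apply: leq_trans t7.
  - exact: nth_mod_inj.
exists n => q qr; have [-> | ->] : q = 0 \/ q = 1 by lia.
  by rewrite addn0.
by rewrite muln1.
Qed.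

Theorem mainTheorem6 (T : finType) (e : rel T)
  (Hsimple : simple_graph e) (Hcubic : cubic e) (Hbip : bipartite e)
  (C : seq T) (HCuniq : uniq C) (HCcycle : cycle e C) (Ht : 6 <= size C) :
  exists P : {set {set T}},
    [/\ partition P [set x in C],
        3 * #|P| <= size C &
        forall W, W \in P -> 2 <= #|W| /\ induced_path e W].
Proof.
have [e_sym e_irr] := Hsimple.
have [x0 _] : exists x : T, true by case: C Ht {HCuniq HCcycle} => // x; exists x.
set t := size C; pose v i := nth x0 C (i %% t).
have v_walk : forall i, e (v i) (v i.+1).
  by apply: cycle_nth_modS => //; apply: leq_trans Ht.
have nochord2 := bipartite_walk_nochord2 v_walk Hbip.
have v_inj a l : l <= t -> {in iota a l &, injective v} by move=> l_le_t; apply: nth_mod_inj.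
have [n free4] := cubic_cycle_free_starts x0 e_sym Hcubic HCuniq HCcycle Ht.
set r := t %% 3 in free4 *; set k := t %/ 3.
pose bs := segments v n 4 r ++ segments v (n + 4 * r) 3 (k - r).
have flat_bs : flatten bs = [seq v i | i <- iota n t].
  rewrite flatten_cat !flatten_segments -map_cat -iotaD; congr (map _ (iota _ _)); lia.
have blocks b : b \in bs -> 2 <= #|[set x in b]| /\ induced_path e [set x in b].
  rewrite mem_cat => /orP[] /mem_segments[q qm ->];
    apply: walk_segment_induced_path => //; try (apply: v_inj; lia).
  by move=> _; apply: free4.
have Ubs : uniq (flatten bs).
  by rewrite flat_bs map_inj_in_uniq ?iota_uniq //; exact: (v_inj n t (leqnn t)).
have bs0 : [::] \notin bs by apply/negP => /blocks[]; rewrite cardsE card0.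
have [P [partP sizeP memP]] := partition_blocks Ubs bs0.
exists P; split.
- rewrite (_ : [set x in C] = [set x in flatten bs]) //.
  by apply/setP => x; rewrite !inE flat_bs mem_nth_mod_window.
- move: sizeP; rewrite size_cat !size_map !size_iota; lia.
- by move=> W /memP[b /blocks bP ->].
Qed.
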